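(* Let $X$ be a metric space, $f\in\Delta(X)$, $x,y,\bar x,\bar y\in X$ with $\{x,y\},\{\bar x,\bar y\}\in A(f)$. Then each of the following conditions implies that also $\{x,\bar y\},\{\bar x,y\}\in A(f)$: (1) $d(x,y)+d(\bar x,\bar y)\le d(x,\bar y)+d(\bar x,y)$; (2) $C(x,y)\cap C(\bar x,\bar y)\neq\emptyset$; (3) $I(x,\bar y)\cap I(\bar x,y)\ne\emptyset$; (4) there exists $v\in I(x,y)\cap I(\bar x,\bar y)$ such that $C(x,v)=C(\bar x,v)$.
   Context: $\Delta(X)=\{f\colon X\to\mathbb R: f(x)+f(y)\ge d(x,y)\ \forall x,y\}$. $A(f)$ is the set of unordered pairs $\{x,y\}$ ($x=y$ allowed) with $f(x)+f(y)=d(x,y)$. $I(x,y)=\{v: d(x,v)+d(v,y)=d(x,y)\}$, and $C(x,v)=\{y\in X: v\in I(x,y)\}$. *)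

From Stdlib Require Import Reals.
Open Scope R_scope.

Record MetricSpace := {
  carrier :> Type;
  md : carrier -> carrier -> R;
  md_nonneg : forall x y, 0 <= md x y;
  md_eq0 : forall x y, md x y = 0 <-> x = y;
  md_sym : forall x y, md x y = md y x;
  md_tri : forall x y z, md x z <= md x y + md y z
}.

Section Defs.
Variable X : MetricSpace.

Definition InDelta (f : X -> R) : Prop :=
  forall x y : X, f x + f y >= md X x y.

(* {x,y} in A(f) (unordered pair; the condition is symmetric) *)
Definition inA (f : X -> R) (x y : X) : Prop :=
  f x + f y = md X x y.

Definition Ival (x y v : X) : Prop :=
  md X x v + md X v y = md X x y.

(* C(x,v) = { y | v in I(x,y) } *)
Definition Cset (x v y : X) : Prop := Ival x y v.
End Defs.

(* Adding the two Delta inequalities f x + f yb >= d(x,yb) and f xb + f y >= d(xb,y) and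
   comparing with the two equalities of A(f) shows that both inequalities are equalities as
   soon as d(x,y) + d(xb,yb) <= d(x,yb) + d(xb,y).  Conditions (2) and (3) give this
   four-point inequality by the triangle inequality through the common point, and
   condition (4) is a special case of (3): C(x,v) = C(xb,v) moves yb into C(x,v) and
   y into C(xb,v), so v itself lies in I(x,yb) and in I(xb,y). *)

From Stdlib Require Import Reals Lra.
Open Scope R_scope.

Section Exchange.
Variable X : MetricSpace.

Lemma inA_exchange (f : X -> R) (x y xb yb : X) :
  InDelta X f -> inA X f x y -> inA X f xb yb ->
  md X x y + md X xb yb <= md X x yb + md X xb y ->
  inA X f x yb /\ inA X f xb y.
Proof.
  unfold InDelta, inA; intros Hf Hxy Hxyb Hle.
  pose proof (Hf x yb); pose proof (Hf xb y); split; lra.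
Qed.

Lemma four_point_of_Cset (x y xb yb z : X) :
  Cset X x y z -> Cset X xb yb z ->
  md X x y + md X xb yb <= md X x yb + md X xb y.
Proof.
  unfold Cset, Ival; intros Hz Hzb.
  pose proof (md_tri X x yb z); pose proof (md_tri X xb y z); lra.
Qed.

Lemma four_point_of_Ival (x y xb yb w : X) :
  Ival X x yb w -> Ival X xb y w ->
  md X x y + md X xb yb <= md X x yb + md X xb y.
Proof.
  unfold Ival; intros Hw Hwb.
  pose proof (md_tri X x w y); pose proof (md_tri X xb w yb).
  rewrite (md_sym X w yb) in *; rewrite (md_sym X w y) in *; lra.
Qed.

Lemma Ival_exchange_of_Cset_eq (x y xb yb v : X) :
  Ival X x y v -> Ival X xb yb v ->
  (forall z, Cset X x v z <-> Cset X xb v z) ->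
  Ival X x yb v /\ Ival X xb y v.
Proof.
  intros Hv Hvb HC; split.
  - exact (proj2 (HC yb) Hvb).
  - exact (proj1 (HC y) Hv).
Qed.

End Exchange.

Theorem lemma5p2 (X : MetricSpace) (f : X -> R) (x y xb yb : X) :
  InDelta X f -> inA X f x y -> inA X f xb yb ->
  ( md X x y + md X xb yb <= md X x yb + md X xb y
    \/ (exists z : X, Cset X x y z /\ Cset X xb yb z)
    \/ (exists w : X, Ival X x yb w /\ Ival X xb y w)
    \/ (exists v : X, Ival X x y v /\ Ival X xb yb v /\
          (forall z : X, Cset X x v z <-> Cset X xb v z)) ) ->
  inA X f x yb /\ inA X f xb y.
Proof.
  intros Hf Hxy Hxyb Hcond; apply inA_exchange; try assumption.
  destruct Hcond as [Hle | [[z [Hz Hzb]] | [[w [Hw Hwb]] | [v [Hv [Hvb HC]]]]]].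
  - exact Hle.
  - exact (four_point_of_Cset X x y xb yb z Hz Hzb).
  - exact (four_point_of_Ival X x y xb yb w Hw Hwb).
  - destruct (Ival_exchange_of_Cset_eq X x y xb yb v Hv Hvb HC) as [Hw Hwb].
    exact (four_point_of_Ival X x y xb yb v Hw Hwb).
Qed.
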